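(* Let $\mathbb{X},\mathbb{Y}$ be $n$-dimensional real polyhedral Banach spaces, $F$ a facet of $B_{\mathbb{X}}$, and $T:\mathbb{X}\to\mathbb{Y}$ a bijective linear operator that preserves Birkhoff–James orthogonality at each point of $\operatorname{Int}_r F$. Let $u\in\operatorname{Int}_r F$. Then there is a facet $G$ of $B_{\mathbb{Y}}$ such that $\frac{1}{\|Tu\|}T(\operatorname{Int}_r F)\subseteq\operatorname{Int}_r G$.
   Context: A finite-dimensional Banach space is polyhedral if its closed unit ball has finitely many extreme points. A convex subset $F$ of a convex set $G$ is a face of $G$ if whenever $a,b\in G$, $0<t<1$, $(1-t)a+tb\in F$, then $a,b\in F$; its dimension is $\dim\operatorname{span}\{a-b:a,b\in F\}$; a facet is a maximal proper face (for an $n$-dimensional polyhedral space, an $(n-1)$-dimensional face of the unit ball). $\operatorname{aff}(D)$ is the affine hull of $D$, and $\operatorname{Int}_r D=\{x\in D:\exists\varepsilon>0,\ B(x,\varepsilon)\cap\operatorname{aff}(D)\subseteq D\}$ is the relative interior. $u\perp_B v$ means $\|u+\lambda v\|\ge\|u\|$ for all real $\lambda$; $T$ preserves Birkhoff–James orthogonality at $x$ if $x\perp_B w\Rightarrow Tx\perp_B Tw$ for all $w$. *)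

(* finite-dimensional real normed spaces modelled as 'rV[R]_n
   equipped with an arbitrary norm function. *)
From HB Require Import structures.
From mathcomp Require Import all_boot all_order all_algebra.
From mathcomp Require Import classical_sets cardinality reals.
Set Implicit Arguments. Unset Strict Implicit. Unset Printing Implicit Defensive.
Import Order.TTheory GRing.Theory Num.Theory.
Local Open Scope ring_scope.
Local Open Scope classical_set_scope.

Section Defs.
Variables (R : realType) (n : nat).
Notation V := 'rV[R]_n.

Definition is_norm (N : V -> R) : Prop :=
  [/\ forall x, N x = 0 -> x = 0,
      forall (a : R) x, N (a *: x) = `|a| * N x &
      forall x y, N (x + y) <= N x + N y].

Definition unit_ball (N : V -> R) : set V := [set x | N x <= 1].

Definition convex_set (C : set V) : Prop :=
  forall a b (t : R), C a -> C b -> 0 <= t <= 1 -> C ((1 - t) *: a + t *: b).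

Definition is_face (G F : set V) : Prop :=
  [/\ F `<=` G, convex_set F &
      forall a b (t : R), G a -> G b -> 0 < t < 1 ->
        F ((1 - t) *: a + t *: b) -> F a /\ F b].

Definition extreme_point (G : set V) (x : V) : Prop := is_face G [set x].

Definition is_facet (G F : set V) : Prop :=
  [/\ is_face G F, F <> G &
      forall F', is_face G F' -> F' <> G -> F `<=` F' -> F' = F].

Definition polyhedral (N : V -> R) : Prop :=
  finite_set [set x | extreme_point (unit_ball N) x].

Definition aff (D : set V) : set V :=
  [set x | exists (m : nat) (c : 'I_m -> R) (p : 'I_m -> V),
     [/\ forall i, D (p i), \sum_(i < m) c i = 1 & x = \sum_(i < m) c i *: p i]].

Definition relint (N : V -> R) (D : set V) : set V :=
  [set x | D x /\ exists2 e : R, 0 < e &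
     forall y, N (y - x) < e -> aff D y -> D y].

Definition bj_orth (N : V -> R) (u v : V) : Prop :=
  forall l : R, N u <= N (u + l *: v).

Definition preserves_bj_at (NX NY : V -> R) (T : V -> V) (x : V) : Prop :=
  forall w, bj_orth NX x w -> bj_orth NY (T x) (T w).

End Defs.

(* Since the unit ball of X has finitely many extreme points and every point of the ball is
   a convex combination of them, the points of the unit sphere close to [u] lie in [F].
   Hence [NX] is additive on a cone around [u], and its linear extension [phi] supports [F]:
   [phi <= NX], [phi = 1] on [F], and the hyperplane [phi = 1] lies in the affine hull of [F].
   For [x] in [Int_r F], [x] is Birkhoff-James orthogonal to [ker phi], so [T x] is
   orthogonal to [T (ker phi)].  Comparing two points of [Int_r F] shows that [NY] is
   constant, equal to [c = NY (T u)], on [T (Int_r F)], and orthogonality at [u] shows that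
   [g = c (phi \o T^-1)] satisfies [g <= NY].  So [G = {y in B_Y | g y = 1}] is a face of
   [B_Y] containing [T (Int_r F) / c]; as [T^-1] is bounded, [G] fills a neighbourhood of
   these points in the hyperplane [g = 1], which makes [G] a facet and puts them in its
   relative interior. *)

From HB Require Import structures.
From mathcomp Require Import all_boot all_order all_algebra.
From mathcomp Require Import boolp classical_sets cardinality reals.
From mathcomp Require Import ring lra zify.
Import Order.TTheory GRing.Theory Num.Theory.
Set Implicit Arguments. Unset Strict Implicit. Unset Printing Implicit Defensive.
Local Open Scope ring_scope.
Local Open Scope classical_set_scope.

Section FiniteSets.
Variables (R : realType) (T : eqType).

Lemma finite_ub (S : set T) (f : T -> R) : finite_set S ->
  exists C : R, forall e, S e -> f e <= C.
Proof.
move=> /finite_seqP [s ->] {S}; elim: s => [|x s [C fC]]; first by exists 0.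
exists (Num.max C (f x)) => e; rewrite /= inE => /orP[/eqP ->|es].
  by rewrite le_max lexx orbT.
by rewrite le_max fC.
Qed.

Lemma finite_gap (S : set T) (f : T -> R) : finite_set S -> (forall e, S e -> f e < 1) ->
  exists2 g : R, 0 < g & forall e, S e -> f e <= 1 - g.
Proof.
move=> /finite_seqP [s ->] {S}; elim: s => [|x s IH] f1; first by exists 1.
have [g g0 fg] : exists2 g : R, 0 < g & forall e, e \in s -> f e <= 1 - g.
  by apply: IH => e es; apply: f1; rewrite /= inE es orbT.
have fx1 : f x < 1 by apply: f1; rewrite /= mem_head.
exists (Num.min g (1 - f x)); first by rewrite lt_min g0 subr_gt0.
move=> e; rewrite /= inE => /orP[/eqP ->|es].
  by rewrite lerBrDr -lerBrDl ge_min lexx orbT.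
by apply: le_trans (fg _ es) _; rewrite lerB // ge_min lexx.
Qed.

End FiniteSets.

Section Subspaces.
Variables (R : realType) (n : nat).
Notation V := 'rV[R]_n.

Definition scalar_of (f : V -> R) (f_lin : linear_for *%R f) : {scalar V} :=
  HB.pack f (GRing.isLinear.Build _ _ _ _ f f_lin).

Lemma dimv_lt (U1 U : {vspace V}) w : (U1 <= U)%VS -> w \in U -> w \notin U1 ->
  (\dim U1 < \dim U)%N.
Proof.
move=> sU wU wU1; have [le eq] := dimv_leqif_sup sU.
rewrite ltn_neqAle le andbT eq; apply/negP => /subvP h.
by move: wU1; rewrite h.
Qed.

Lemma vspace_of_pred (P : V -> Prop) : P 0 -> (forall v w, P v -> P w -> P (v + w)) ->
  (forall k v, P v -> P (k *: v)) -> exists U : {vspace V}, forall v, v \in U <-> P v.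
Proof.
move=> P0 PD PZ.
suff grow m (U : {vspace V}) : (forall v, v \in U -> P v) ->
    (\dim {:V} - \dim U <= m)%N -> exists U' : {vspace V}, forall v, v \in U' <-> P v.
  by apply: (grow _ 0%VS) => [v /[!memv0] /eqP ->|]; rewrite ?leq_subr.
elim: m U => [|m IH] U UP dimU.
all: have [[v [Pv vU]]|nex] := pselect (exists v, P v /\ v \notin U);
  last by exists U => v; split => [/UP //|Pv]; apply/negPn/negP => vU; apply: nex; exists v.
all: have U'P : forall w, w \in (U + <[v]>)%VS -> P w
  by move=> w /memv_addP [a aU [b /vlineP [k ->] ->]]; apply: PD; [exact: UP | exact: PZ].
all: have := dimv_lt (addvSl U <[v]>) (memv_add (mem0v U) (memv_line v)) _;
  rewrite add0r => /(_ vU) lt; have := dimvS (subvf (U + <[v]>)).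
- lia.
- by move=> le; apply: (IH (U + <[v]>)%VS) => //; lia.
Qed.

End Subspaces.

Section Convexity.
Variables (R : realType) (n : nat).
Notation V := 'rV[R]_n.

Definition hull (S : set V) : set V :=
  [set x | forall C, convex_set C -> S `<=` C -> C x].

Lemma hull_convex S : convex_set (hull S).
Proof. by move=> a b t ha hb t01 C Cconv SC; exact: Cconv (ha C Cconv SC) (hb C Cconv SC) t01. Qed.

Lemma sub_hull S : S `<=` hull S.
Proof. by move=> x Sx C _; apply. Qed.

Lemma convex_conic2 (C : set V) a a' (k k' : R) : convex_set C -> C a -> C a' ->
  0 <= k -> 0 <= k' -> exists2 b, C b & k *: a + k' *: a' = (k + k') *: b.
Proof.
move=> Cconv Ca Ca' k0 k'0; have [kk0|kk0] := eqVneq (k + k') 0.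
  have -> : k = 0 by apply: le_anti; rewrite k0 andbT; lra.
  have -> : k' = 0 by apply: le_anti; rewrite k'0 andbT; lra.
  by exists a; rewrite // !addr0 !scale0r addr0.
have kk'0 : 0 < k + k' by rewrite lt_neqAle eq_sym kk0 addr_ge0.
exists ((1 - k' / (k + k')) *: a + k' / (k + k') *: a').
  apply: Cconv => //; apply/andP; split; first by rewrite divr_ge0 // ltW.
  by rewrite ler_pdivrMr // mul1r lerDr.
by apply/rowP => j; rewrite !mxE; field.
Qed.

Definition join (C1 C2 : set V) : set V :=
  [set x | exists L a b, [/\ 0 <= L <= 1, C1 a, C2 b & x = (1 - L) *: a + L *: b]].

Lemma join_convex C1 C2 : convex_set C1 -> convex_set C2 -> convex_set (join C1 C2).
Proof.
move=> C1conv C2conv x x' t [L [a [b [L01 Ca Cb ->]]]] [L' [a' [b' [L'01 Ca' Cb' ->]]]] t01.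
case/andP: L01 => L0 L1; case/andP: L'01 => L'0 L'1; case/andP: t01 => t0 t1.
have [a'' Ca'' ea] : exists2 a'', C1 a'' &
    (1 - t) * (1 - L) *: a + t * (1 - L') *: a' = ((1 - t) * (1 - L) + t * (1 - L')) *: a''.
  by apply: convex_conic2 => //; nra.
have [b'' Cb'' eb] : exists2 b'', C2 b'' &
    (1 - t) * L *: b + t * L' *: b' = ((1 - t) * L + t * L') *: b''.
  by apply: convex_conic2 => //; nra.
exists ((1 - t) * L + t * L'), a'', b''; split => //; first by apply/andP; split; nra.
have -> : 1 - ((1 - t) * L + t * L') = (1 - t) * (1 - L) + t * (1 - L') by ring.
rewrite -ea -eb; apply/rowP => j; rewrite !mxE; ring.
Qed.

Lemma hull_join (C1 C2 S : set V) c1 c2 : convex_set C1 -> convex_set C2 -> C1 c1 -> C2 c2 ->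
  S `<=` C1 `|` C2 -> hull S `<=` join C1 C2.
Proof.
move=> C1conv C2conv Cc1 Cc2 SC x; apply => //; first exact: join_convex.
move=> s /SC [C1s|C2s].
  by exists 0, s, c2; rewrite ler01 lexx subr0 scale1r scale0r addr0.
by exists 1, c1, s; rewrite ler01 lexx subrr scale1r scale0r add0r.
Qed.

End Convexity.

Section NormedSpace.
Variables (R : realType) (n : nat) (N : 'rV[R]_n -> R).
Hypothesis hN : is_norm N.
Notation V := 'rV[R]_n.
Notation B := (unit_ball N).

Lemma norm_eq0 x : N x = 0 -> x = 0. Proof. by case: hN => h _ _; apply: h. Qed.
Lemma normZ a x : N (a *: x) = `|a| * N x. Proof. by case: hN => _ h _; apply: h. Qed.
Lemma normD x y : N (x + y) <= N x + N y. Proof. by case: hN => _ _ h; apply: h. Qed.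

Lemma norm0 : N 0 = 0.
Proof. by rewrite -(scale0r 0) normZ normr0 mul0r. Qed.

Lemma normNv x : N (- x) = N x.
Proof. by rewrite -scaleN1r normZ normrN normr1 mul1r. Qed.

Lemma norm_ge0 x : 0 <= N x.
Proof. have := normD x (- x); rewrite subrr norm0 normNv => h; lra. Qed.

Lemma distC x y : N (x - y) = N (y - x).
Proof. by rewrite -normNv opprB. Qed.

Lemma norm_gt0 x : x != 0 -> 0 < N x.
Proof.
move=> x0; rewrite lt_neqAle norm_ge0 andbT; apply/eqP => /esym/norm_eq0 x0'.
by rewrite x0' eqxx in x0.
Qed.

Lemma normZ_ge0 a x : 0 <= a -> N (a *: x) = a * N x.
Proof. by move=> a0; rewrite normZ ger0_norm. Qed.

Lemma norm_le_dist x y : N x <= N y + N (x - y).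
Proof. by have := normD y (x - y); rewrite addrC subrK. Qed.

Lemma norm_conv a b t : 0 <= t <= 1 ->
  N ((1 - t) *: a + t *: b) <= (1 - t) * N a + t * N b.
Proof. by case/andP=> t0 t1; apply: le_trans (normD _ _) _; rewrite !normZ_ge0 ?subr_ge0. Qed.

Lemma ball_conv a b t : N a <= 1 -> N b <= 1 -> 0 <= t <= 1 ->
  N ((1 - t) *: a + t *: b) <= 1.
Proof.
move=> a1 b1 t01; apply: le_trans (norm_conv _ _ t01) _; case/andP: t01 => t0 t1.
have : (1 - t) * N a <= 1 - t by rewrite ler_piMr ?subr_ge0.
have : t * N b <= t by rewrite ler_piMr.
lra.
Qed.

Lemma ball_convex : convex_set B.
Proof. by move=> a b t; exact: ball_conv. Qed.

(* [p] lies strictly inside the segment from [a] to [p + s (p - a)], which stays in the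
   ball for small [s]. *)
Lemma face_ball_interior (G : set V) p : is_face B G -> G p -> N p < 1 -> G = B.
Proof.
case=> GB _ Gface Gp p1; apply/seteqP; split => // a Ba.
pose s := (1 - N p) / 2.
have s0 : 0 < s by rewrite /s divr_gt0 // subr_gt0.
pose b := p + s *: (p - a).
have Bb : B b.
  rewrite /unit_ball /b /=; apply: le_trans (normD _ _) _; rewrite normZ_ge0 ?ltW //.
  have : N (p - a) <= N p + N a by rewrite -[N a]normNv normD.
  have : N a <= 1 := Ba.
  have := norm_ge0 p; rewrite /s; nra.
have t01 : 0 < s / (1 + s) < 1.
  by rewrite divr_gt0 ?addr_gt0 //= ltr_pdivrMr ?addr_gt0 // mul1r ltrDr.
have := Gface b a _ Bb Ba t01.
have -> : (1 - s / (1 + s)) *: b + s / (1 + s) *: a = p.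
  by apply/rowP => j; rewrite /b !mxE; field; rewrite gt_eqF // addr_gt0.
by case.
Qed.

Lemma ball_segment x w s s' : N x <= 1 -> N (x + s *: w) <= 1 -> 0 <= s' <= s ->
  N (x + s' *: w) <= 1.
Proof.
move=> x1 xs1 /andP[s'0 s's].
have [->|s'n0] := eqVneq s' 0; first by rewrite scale0r addr0.
have s0 : 0 < s by apply: lt_le_trans s's; rewrite lt_neqAle eq_sym s'n0.
have -> : x + s' *: w = (1 - s' / s) *: x + (s' / s) *: (x + s *: w).
  by apply/rowP => j; rewrite !mxE; field; rewrite gt_eqF.
apply: ball_conv => //; apply/andP; split; first by rewrite divr_ge0 // ltW.
by rewrite ler_pdivrMr // mul1r.
Qed.

(* For [N y <= 1], the smallest face of the ball containing [y]: the points [z] such that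
   the segment from [z] through [y] extends beyond [y] inside the ball. *)
Definition minface (y : V) : set V :=
  [set z | N z <= 1 /\ exists2 s : R, 0 < s & N (y + s *: (y - z)) <= 1].

Lemma minface_self y : N y <= 1 -> minface y y.
Proof. by move=> y1; split => //; exists 1; rewrite // subrr scaler0 addr0. Qed.

Lemma minface_segment_l y a b t : N y <= 1 -> N b <= 1 -> 0 < t < 1 ->
  minface y ((1 - t) *: a + t *: b) -> N a <= 1 -> minface y a.
Proof.
move=> y1 b1 /andP[t0 t1] [_ [s s0 ys1]] a1; split => //.
have st0 : 0 < s * t by rewrite mulr_gt0.
exists (s * (1 - t) / (1 + s * t)); first by rewrite divr_gt0 ?addr_gt0 // mulr_gt0 // subr_gt0.
have -> : y + s * (1 - t) / (1 + s * t) *: (y - a) =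
    (1 - s * t / (1 + s * t)) *: (y + s *: (y - ((1 - t) *: a + t *: b)))
    + s * t / (1 + s * t) *: b.
  by apply/rowP => j; rewrite !mxE; field; rewrite gt_eqF // addr_gt0.
apply: ball_conv => //; apply/andP; split; first by rewrite divr_ge0 // ltW // addr_gt0.
by rewrite ler_pdivrMr ?addr_gt0 // mul1r lerDr.
Qed.

Lemma minface_face y : N y <= 1 -> is_face B (minface y).
Proof.
move=> y1; split; first by move=> z [].
- move=> a b t [a1 [s1 s10 as1]] [b1 [s2 s20 bs2]] t01; split; first exact: ball_conv.
  pose s := Num.min s1 s2.
  have s0 : 0 < s by rewrite lt_min s10 s20.
  exists s => //.
  have as1' : N (y + s *: (y - a)) <= 1.
    by apply: (ball_segment y1 as1); rewrite ltW //= ge_min lexx.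
  have bs2' : N (y + s *: (y - b)) <= 1.
    by apply: (ball_segment y1 bs2); rewrite ltW //= ge_min lexx orbT.
  have := ball_conv as1' bs2' t01.
  congr (N _ <= 1); by apply/rowP => j; rewrite !mxE; ring.
- move=> a b t a1 b1 t01 yab; split; first exact: minface_segment_l yab a1.
  apply: (minface_segment_l (t := 1 - t) y1 a1); last exact: b1.
    by case/andP: t01 => t0 t1; apply/andP; split; lra.
  by congr (minface y _): yab; apply/rowP => j; rewrite !mxE; ring.
Qed.

Lemma minface_proper y : N y = 1 -> minface y <> B.
Proof.
move=> y1 yB; have : B 0 by rewrite /unit_ball /= norm0.
rewrite -yB => -[_ [s s0]]; rewrite subr0 -{1}(scale1r y) -scalerDl normZ_ge0 //.
  by rewrite y1 mulr1; lra.
by rewrite addr_ge0 // ltW.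
Qed.

(* [a] lies strictly inside the segment from [f] to [a + s (a - f)], a point of [F] by
   relative openness at [a]. *)
Lemma face_sub_of_relint (F G : set V) a r : F `<=` B -> is_face B G -> G a -> F a ->
  0 < r -> (forall z, N (z - a) < r -> aff F z -> F z) -> F `<=` G.
Proof.
move=> FB [_ _ Gface] Ga Fa r0 Fopen f Ff.
have af2 : N (a - f) <= 2.
  apply: le_trans (normD _ _) _; rewrite normNv.
  by have := FB _ Fa; have := FB _ Ff; rewrite /unit_ball /=; lra.
pose s := r / 4.
have s0 : 0 < s by rewrite divr_gt0.
pose z := a + s *: (a - f).
have Fz : F z.
  apply: Fopen.
    rewrite /z addrC addKr normZ_ge0 ?ltW //.
    have : s * N (a - f) <= s * 2 by rewrite ler_wpM2l // ltW.
    rewrite /s; lra.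
  exists 2%N, [ffun i : 'I_2 => if i == ord0 then 1 + s else - s],
      [ffun i : 'I_2 => if i == ord0 then a else f].
  rewrite !big_ord_recr !big_ord0 /= !ffunE /= !add0r; split.
  - by move=> i; rewrite ffunE; case: ifP.
  - by ring.
  - by apply/rowP => j; rewrite /z !mxE; ring.
have t01 : 0 < s / (1 + s) < 1.
  by rewrite divr_gt0 ?addr_gt0 //= ltr_pdivrMr ?addr_gt0 // mul1r ltrDr.
have := Gface z f _ (FB _ Fz) (FB _ Ff) t01.
have -> : (1 - s / (1 + s)) *: z + s / (1 + s) *: f = a.
  by apply/rowP => j; rewrite /z !mxE; field; rewrite gt_eqF // addr_gt0.
by move=> /(_ Ga) [].
Qed.

Definition ball_dir (x w : V) :=
  exists2 e : R, 0 < e & forall c, `|c| <= e -> N (x + c *: w) <= 1.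

Lemma ball_dir_vspace x : N x <= 1 ->
  exists U : {vspace V}, forall v, v \in U <-> ball_dir x v.
Proof.
move=> x1; apply: vspace_of_pred.
- by exists 1 => // c _; rewrite scaler0 addr0.
- move=> v w [e1 e10 hv] [e2 e20 hw].
  exists (Num.min e1 e2 / 2); first by rewrite divr_gt0 // lt_min e10 e20.
  move=> c c_small.
  have m1 : Num.min e1 e2 <= e1 by rewrite ge_min lexx.
  have m2 : Num.min e1 e2 <= e2 by rewrite ge_min lexx orbT.
  have c1 : `|2 * c| <= e1 by rewrite normrM ger0_norm //; lra.
  have c2 : `|2 * c| <= e2 by rewrite normrM ger0_norm //; lra.
  have := ball_conv (hv _ c1) (hw _ c2) (_ : 0 <= 1 / 2 <= 1).
  have -> : (1 - 1 / 2) *: (x + (2 * c) *: v) + 1 / 2 *: (x + (2 * c) *: w) = x + c *: (v + w).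
    by apply/rowP => j; rewrite !mxE; field.
  by apply; apply/andP; split; lra.
- move=> k v [e e0 hv]; exists (e / (`|k| + 1)); first by rewrite divr_gt0 // ltr_wpDl.
  move=> c c_small; rewrite scalerA; apply: hv; rewrite normrM.
  rewrite ler_pdivlMr ?ltr_wpDl // in c_small.
  by have := normr_ge0 c; have := normr_ge0 k; nra.
Qed.

Lemma ball_dir_segment a b t : N a <= 1 -> N b <= 1 -> 0 < t < 1 ->
  ball_dir ((1 - t) *: a + t *: b) (a - ((1 - t) *: a + t *: b)).
Proof.
move=> a1 b1 /andP[t0 t1].
have x1 : N ((1 - t) *: a + t *: b) <= 1 by apply: ball_conv => //; apply/andP; split; lra.
exists (Num.min 1 ((1 - t) / t)); first by rewrite lt_min ltr01 divr_gt0 // subr_gt0.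
move=> c; rewrite le_min => /andP[c1 c2].
have [c0|c0] := leP 0 c.
- rewrite ger0_norm // in c1.
  have := ball_conv x1 a1 (_ : 0 <= c <= 1).
  have -> : (1 - c) *: ((1 - t) *: a + t *: b) + c *: a =
      (1 - t) *: a + t *: b + c *: (a - ((1 - t) *: a + t *: b)).
    by apply/rowP => j; rewrite !mxE; ring.
  by apply; apply/andP.
- rewrite ltr0_norm // ler_pdivlMr // in c2.
  have d01 : 0 <= - c * t / (1 - t) <= 1.
    apply/andP; split; first by rewrite divr_ge0 ?mulr_ge0 //; lra.
    by rewrite ler_pdivrMr ?subr_gt0 //; lra.
  have := ball_conv x1 b1 d01.
  have -> : (1 - - c * t / (1 - t)) *: ((1 - t) *: a + t *: b) + - c * t / (1 - t) *: b =
      (1 - t) *: a + t *: b + c *: (a - ((1 - t) *: a + t *: b)).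
    by apply/rowP => j; rewrite !mxE; field; rewrite subr_eq0 eq_sym lt_eqF.
  by [].
Qed.

Lemma ball_dir0_extreme x : N x <= 1 -> (forall w, ball_dir x w -> w = 0) ->
  extreme_point B x.
Proof.
move=> x1 nodir; split; first by move=> y ->.
- by move=> a b t -> -> _; apply/rowP => j; rewrite !mxE; ring.
- move=> a b t a1 b1 t01 /= xab.
  have := ball_dir_segment a1 b1 t01; rewrite xab => /nodir /eqP; rewrite subr_eq0 => /eqP xa.
  split => //.
  have t'01 : 0 < 1 - t < 1 by case/andP: t01 => ? ?; apply/andP; split; lra.
  have := ball_dir_segment b1 a1 t'01.
  have -> : (1 - (1 - t)) *: b + (1 - t) *: a = x.
    by rewrite -xab; apply/rowP => j; rewrite !mxE; ring.
  by move=> /nodir /eqP; rewrite subr_eq0 => /eqP.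
Qed.

Lemma ball_dir_interior a b x t v : N b <= 1 -> 0 <= t < 1 ->
  x = (1 - t) *: a + t *: b -> ball_dir a v -> ball_dir x v.
Proof.
move=> b1 /andP[t0 t1] -> [e e0 hv]; exists ((1 - t) * e); first by rewrite mulr_gt0 // subr_gt0.
move=> c c_small; have t'0 : 0 < 1 - t by rewrite subr_gt0.
have c' : `|c / (1 - t)| <= e by rewrite normrM normfV (gtr0_norm t'0) ler_pdivrMr // mulrC.
have := ball_conv (hv _ c') b1 (_ : 0 <= t <= 1).
have -> : (1 - t) *: (a + c / (1 - t) *: v) + t *: b = (1 - t) *: a + t *: b + c *: v.
  by apply/rowP => j; rewrite !mxE; field; rewrite gt_eqF.
by apply; apply/andP; split; lra.
Qed.

Lemma ball_ray_max x w : N x <= 1 -> w != 0 -> exists s, [/\ 0 <= s, N (x + s *: w) <= 1 &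
  forall s', 0 <= s' -> N (x + s' *: w) <= 1 -> s' <= s].
Proof.
move=> x1 w0; have w_gt0 := norm_gt0 w0.
pose S := [set s : R | 0 <= s /\ N (x + s *: w) <= 1].
have supS : has_sup S.
  split; first by exists 0; split; rewrite // scale0r addr0.
  exists ((1 + N x) / N w) => s [s0 xs1]; rewrite ler_pdivlMr //.
  have := norm_le_dist (s *: w) (x + s *: w).
  have -> : s *: w - (x + s *: w) = - x by apply/rowP => j; rewrite !mxE; ring.
  by rewrite normNv normZ_ge0 //; lra.
have ub := sup_upper_bound supS.
have sup0 : 0 <= sup S by apply: ub; split; rewrite // scale0r addr0.
exists (sup S); split => //; last by move=> s' s'0 xs'1; apply: ub.
apply/ler_addgt0Pr => d d0.
have [e [e0 xe1] de] := sup_adherent (divr_gt0 d0 w_gt0) supS.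
have esup : e <= sup S by apply: ub.
have := normD (x + e *: w) ((sup S - e) *: w); rewrite normZ_ge0 ?subr_ge0 //.
have -> : x + e *: w + (sup S - e) *: w = x + sup S *: w by apply/rowP => j; rewrite !mxE; ring.
rewrite ltrBlDr -ltrBlDl in de.
have : (sup S - e) * N w <= d / N w * N w by rewrite ler_wpM2r // ?ltW.
by rewrite divfK ?gt_eqF //; lra.
Qed.

Lemma ball_ray_end x w : N x <= 1 -> ball_dir x w -> w != 0 ->
  exists2 s, 0 < s & N (x + s *: w) <= 1 /\ ~ ball_dir (x + s *: w) w.
Proof.
move=> x1 [e e0 hw] w0; have [s [s0 xs1 smax]] := ball_ray_max x1 w0.
have es : e <= s.
  apply: smax; first exact: ltW.
  by apply: hw; rewrite ger0_norm // ltW.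
exists s; first exact: lt_le_trans es.
split => // -[e' e'0 hw'].
have e'e' : `|e'| <= e' by rewrite ger0_norm // ltW.
have := hw' e' e'e'.
have -> : x + s *: w + e' *: w = x + (s + e') *: w by apply/rowP => j; rewrite !mxE; ring.
move=> /(smax _ (addr_ge0 s0 (ltW e'0))); lra.
Qed.

(* A point with a nonzero two-sided direction [w] lies strictly between the two ends of
   the chord of the ball through it along [w], and there [w] stops being two-sided. *)
Lemma ball_dir_split x w : N x <= 1 -> ball_dir x w -> w != 0 ->
  exists y1 y2 t, [/\ 0 < t < 1, x = (1 - t) *: y1 + t *: y2, N y1 <= 1 /\ N y2 <= 1,
    ~ ball_dir y1 w /\ ~ ball_dir y2 w &
    forall v, ball_dir y1 v \/ ball_dir y2 v -> ball_dir x v].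
Proof.
move=> x1 xw w0; have [s1 s10 [y1 y1w]] := ball_ray_end x1 xw w0.
have [s2 s20 [y2 y2w]] : exists2 s2, 0 < s2 &
    N (x + s2 *: - w) <= 1 /\ ~ ball_dir (x + s2 *: - w) w.
  have [e e0 hw] := xw.
  have xNw : ball_dir x (- w).
    by exists e => // c ce; rewrite scalerN -scaleNr; apply: hw; rewrite normrN.
  have Nw0 : - w != 0 by rewrite oppr_eq0.
  have [s2 s20 [y2 y2w]] := ball_ray_end x1 xNw Nw0.
  exists s2 => //; split => // -[e' e'0 hw']; apply: y2w; exists e' => // c ce.
  by rewrite [c *: - w]scalerN -scaleNr; apply: hw'; rewrite normrN.
pose t := s1 / (s1 + s2); have s12 : 0 < s1 + s2 by rewrite addr_gt0.
have t01 : 0 < t < 1.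
  by apply/andP; split; [rewrite divr_gt0 | rewrite ltr_pdivrMr // mul1r ltrDl].
have ex2 : x = (1 - t) *: (x + s1 *: w) + t *: (x + s2 *: - w).
  by apply/rowP => j; rewrite !mxE /t; field; rewrite gt_eqF.
exists (x + s1 *: w), (x + s2 *: - w), t; split => // v [y1v|y2v].
  by apply: ball_dir_interior y2 _ ex2 y1v; case/andP: t01 => ? ?; apply/andP; split; lra.
apply: (ball_dir_interior (t := 1 - t) y1) y2v.
  by case/andP: t01 => ? ?; apply/andP; split; lra.
by rewrite {1}ex2; apply/rowP => j; rewrite !mxE; ring.
Qed.

(* Finite-dimensional Krein--Milman, by induction on the dimension of the space of
   two-sided directions of the ball at [x]. *)
Lemma ball_hull_extreme : B `<=` hull (extreme_point B).
Proof.
suff ind k x (U : {vspace V}) : N x <= 1 -> (forall v, v \in U <-> ball_dir x v) ->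
    (\dim U <= k)%N -> hull (extreme_point B) x.
  by move=> x x1; have [U dirU] := ball_dir_vspace x1; exact: ind x1 dirU (leqnn _).
elim: k x U => [|k IH] x U x1 dirU dimU.
all: have [[w [xw w0]]|nodir] := pselect (exists w, ball_dir x w /\ w != 0);
  last by apply: sub_hull; apply: ball_dir0_extreme => // w xw;
    apply/eqP/negPn/negP => w0; apply: nodir; exists w.
  by move: dimU; rewrite leqn0 dimv_eq0 => /eqP U0; move/dirU: xw; rewrite U0 memv0 (negPf w0).
have [y1 [y2 [t [t01 xy [y1B y2B] [y1w y2w] ydir]]]] := ball_dir_split x1 xw w0.
have IHy y : N y <= 1 -> ~ ball_dir y w -> (forall v, ball_dir y v -> ball_dir x v) ->
    hull (extreme_point B) y.
  move=> yB yw yx; have [Uy dirUy] := ball_dir_vspace yB.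
  have lt : (\dim Uy < \dim U)%N.
    apply: (@dimv_lt _ _ _ _ w); last by apply/negP => /dirUy.
      by apply/subvP => v /dirUy /yx /dirU.
    exact/dirU.
  by apply: (IH _ Uy yB dirUy); rewrite -ltnS (leq_trans lt dimU).
rewrite xy; apply: hull_convex.
- by apply: (IHy _ y1B y1w) => v y1v; apply: ydir; left.
- by apply: (IHy _ y2B y2w) => v y2v; apply: ydir; right.
- by case/andP: t01 => ? ?; apply/andP; split; lra.
Qed.


Lemma relint_near (D : set V) a x e : 0 < e -> (forall z, N (z - a) < e -> aff D z -> D z) ->
  D x -> N (x - a) < e / 2 -> relint N D x.
Proof.
move=> e0 Dopen Dx xa; split => //; exists (e / 2) => [|z zx Dz]; first by rewrite divr_gt0.
by apply: Dopen Dz; have := normD (z - x) (x - a); rewrite addrA subrK; lra.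
Qed.

Lemma hyperplane_sub_aff (phi : {scalar V}) (D : set V) a r y : 0 < r -> phi a = 1 ->
  (forall x, phi x = 1 -> N (x - a) < r -> D x) -> phi y = 1 -> aff D y.
Proof.
move=> r0 pa Dloc py; pose t := r / (2 * (N (y - a) + 1)).
have ya0 : 0 < N (y - a) + 1 by rewrite ltr_wpDl ?norm_ge0.
have t0 : 0 < t by rewrite divr_gt0 // mulr_gt0.
pose y' := a + t *: (y - a).
have Dy' : D y'.
  apply: Dloc; first by rewrite /y' addrC linearD linearZ linearB /= py pa subrr mulr0 add0r.
  rewrite /y' addrC addKr normZ_ge0 ?ltW //.
  have -> : t * N (y - a) = r / 2 * (N (y - a) / (N (y - a) + 1)).
    by rewrite /t; field; rewrite gt_eqF.
  have q1 : N (y - a) / (N (y - a) + 1) < 1 by rewrite ltr_pdivrMr // mul1r ltrDl.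
  have q0 : 0 <= N (y - a) / (N (y - a) + 1) by rewrite divr_ge0 ?norm_ge0 // ltW.
  nra.
exists 2%N, [ffun i : 'I_2 => if i == ord0 then 1 - t^-1 else t^-1],
    [ffun i : 'I_2 => if i == ord0 then a else y'].
rewrite !big_ord_recr !big_ord0 /= !ffunE /= !add0r; split.
- by move=> i; rewrite ffunE; case: ifP => _; [apply: Dloc; rewrite ?subrr ?norm0 |].
- by ring.
- by apply/rowP => j; rewrite /y' !mxE; field; rewrite gt_eqF.
Qed.

Section Facet.
Variables (F : set V) (u : V).
Hypotheses (hF : is_facet B F) (hu : relint N F u).

Lemma facet_sub_ball : F `<=` B. Proof. by case: hF => -[]. Qed.
Lemma facet_convex : convex_set F. Proof. by case: hF => -[]. Qed.
Lemma facet_u : F u. Proof. by case: hu. Qed.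

Lemma facet_norm1 f : F f -> N f = 1.
Proof.
move=> Ff; apply/eqP; rewrite eq_le (facet_sub_ball Ff) /= leNgt; apply/negP => f1.
by case: hF => Fface FB _; apply: FB; exact: face_ball_interior Fface Ff f1.
Qed.

Lemma facet_norm_u : N u = 1. Proof. exact: facet_norm1 facet_u. Qed.

Lemma minface_eq_facet y a : N y = 1 -> relint N F a -> minface y a -> minface y = F.
Proof.
move=> y1 [Fa [r r0 Fopen]] ya; case: hF => _ _ /(_ (minface y)); apply.
- by apply: minface_face; rewrite y1.
- exact: minface_proper.
- by apply: face_sub_of_relint facet_sub_ball (minface_face _) ya Fa r0 Fopen; rewrite y1.
Qed.

(* The midpoint of [u] and [e], written as a convex combination for [ball_conv]. *)
Definition mid (e : V) := (1 - 1 / 2) *: u + 1 / 2 *: e.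

Lemma mid_extreme_lt e : extreme_point B e -> ~ F e -> N (mid e) < 1.
Proof.
move=> [eB _ _] Fe; have e1 : N e <= 1 by apply: eB.
have m1 : N (mid e) <= 1.
  by apply: ball_conv => //; [rewrite facet_norm_u | apply/andP; split; lra].
rewrite lt_neqAle m1 andbT; apply/negP => /eqP m1'; apply: Fe.
have mu : minface (mid e) u.
  split; first by rewrite facet_norm_u.
  exists 1 => //.
  suff -> : mid e + 1 *: (mid e - u) = e by [].
  by apply/rowP => j; rewrite /mid !mxE; field.
rewrite -(minface_eq_facet m1' hu mu); split => //; exists 1 => //.
suff -> : mid e + 1 *: (mid e - e) = u by rewrite facet_norm_u.
by apply/rowP => j; rewrite /mid !mxE; field.
Qed.

Lemma mid_extreme_gap (pN : polyhedral N) :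
  exists2 g : R, 0 < g & forall e, extreme_point B e -> ~ F e -> N (mid e) <= 1 - g.
Proof.
have fin : finite_set [set e | extreme_point B e /\ ~ F e] by apply: sub_finite_set pN => e [].
have [g g0 gap] := finite_gap fin (fun e '(conj eB Fe) => mid_extreme_lt eB Fe).
by exists g => // e eB Fe; apply: gap.
Qed.

Lemma sphere_mem_facet y a b L : N y = 1 -> y = (1 - L) *: a + L *: b -> 0 <= L < 1 ->
  relint N F a -> N b <= 1 -> F y.
Proof.
move=> y1 yab /andP[L0 L1] Fa b1; have y1' : N y <= 1 by rewrite y1.
suff ya : minface y a by rewrite -(minface_eq_facet y1 Fa ya); exact: minface_self.
have [L00|L0'] := eqVneq L 0.
  by move: yab; rewrite L00 subr0 scale1r scale0r addr0 => <-; exact: minface_self.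
have Lp : 0 < L by rewrite lt_neqAle eq_sym L0' L0.
split; first by rewrite facet_norm1 //; case: Fa.
exists ((1 - L) / L); first by rewrite divr_gt0 // subr_gt0.
suff -> : y + (1 - L) / L *: (y - a) = b by [].
by rewrite yab; apply/rowP => j; rewrite !mxE; field; rewrite gt_eqF.
Qed.

Lemma mid_sublevel_convex g : convex_set [set b | N b <= 1 /\ N (mid b) <= 1 - g].
Proof.
move=> b b' t [b1 mb] [b'1 mb'] t01; split; first exact: ball_conv.
have -> : mid ((1 - t) *: b + t *: b') = (1 - t) *: mid b + t *: mid b'.
  by apply/rowP => j; rewrite /mid !mxE; ring.
apply: le_trans (norm_conv _ _ t01) _; case/andP: t01 => t0 t1.
have t'0 : 0 <= 1 - t by rewrite subr_ge0.
by have := ler_wpM2l t'0 mb; have := ler_wpM2l t0 mb'; lra.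
Qed.

(* [(u + y) / 2] is nearly on the sphere, while the part of it coming from [b] is
   [g]-deep inside the ball. *)
Lemma weight_le_dist y a b L g : 0 <= L <= 1 -> F a -> N (mid b) <= 1 - g ->
  y = (1 - L) *: a + L *: b -> L * g <= N (y - u) / 2.
Proof.
move=> /andP[L0 L1] Fa mb yab.
have low : 1 - N (y - u) / 2 <= N (mid y).
  have := norm_le_dist u (mid y).
  have -> : u - mid y = 1 / 2 *: (u - y) by apply/rowP => j; rewrite /mid !mxE; field.
  by rewrite normZ_ge0 ?divr_ge0 // distC facet_norm_u; lra.
have my : mid y = (1 - L) *: mid a + L *: mid b.
  by rewrite yab; apply/rowP => j; rewrite /mid !mxE; ring.
have up := norm_conv (mid a) (mid b) (introT andP (conj L0 L1)); rewrite -my in up.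
have ma : N (mid a) <= 1.
  by apply: ball_conv; rewrite ?facet_norm_u ?(facet_norm1 Fa) //; apply/andP; split; lra.
have L'0 : 0 <= 1 - L by rewrite subr_ge0.
by have := ler_wpM2l L'0 ma; have := ler_wpM2l L0 mb; lra.
Qed.

Lemma dist_le_weight y a b L : 0 <= L <= 1 -> N b <= 1 -> y = (1 - L) *: a + L *: b ->
  (1 - L) * N (a - u) <= N (y - u) + L * 2.
Proof.
move=> /andP[L0 L1] b1 yab.
have -> : (1 - L) * N (a - u) = N ((y - u) - L *: (b - u)).
  by rewrite -normZ_ge0 ?subr_ge0 //; congr N; rewrite yab; apply/rowP => j; rewrite !mxE; ring.
apply: le_trans (normD _ _) _; rewrite normNv normZ_ge0 // lerD2l ler_wpM2l //.
by apply: le_trans (normD _ _) _; rewrite normNv facet_norm_u; lra.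
Qed.

(* Near [u] the unit sphere lies in [F]: writing [y] as a convex combination of extreme
   points, the weight [L] on those outside [F] is small, so [y] is close to a point [a] of
   the convex hull of [F] that is still near [u]. *)
Lemma facet_sphere_local (pN : polyhedral N) :
  exists2 rho : R, 0 < rho & forall y, N y = 1 -> N (y - u) < rho -> F y.
Proof.
have [_ [r r0 Fopen]] := hu.
have [g0 g00 gap0] := mid_extreme_gap pN.
pose g := Num.min g0 (1 / 2).
have g0' : 0 < g by rewrite lt_min g00 divr_gt0.
have g12 : g <= 1 / 2 by rewrite ge_min lexx orbT.
pose C2 := [set b | N b <= 1 /\ N (mid b) <= 1 - g].
have C20 : C2 0.
  by split; rewrite ?norm0 // /mid scaler0 addr0 normZ_ge0 ?facet_norm_u; lra.
have extC : extreme_point B `<=` F `|` C2.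
  move=> e eB; have [Fe|Fe] := pselect (F e); [by left | right].
  case: (eB) => /(_ e erefl) e1 _ _; split => //.
  by apply: le_trans (gap0 _ eB Fe) _; rewrite lerB // ge_min lexx.
exists (Num.min g (r * g / 8)); first by rewrite lt_min g0' divr_gt0 // mulr_gt0.
move=> y y1; rewrite lt_min => /andP[yu_g yu_r].
have yB : B y by rewrite /unit_ball /= y1.
have [L [a [b [L01 Fa [b1 mb] yab]]]] :=
  hull_join facet_convex (mid_sublevel_convex (g := g)) facet_u C20 extC (ball_hull_extreme yB).
have Lg := weight_le_dist L01 Fa mb yab.
have au := dist_le_weight L01 b1 yab.
have L12 : L <= 1 / 2.
  have : L * g <= 1 / 2 * g by lra.
  by rewrite ler_pM2r.
apply: (sphere_mem_facet y1 yab _ _ b1); first by case/andP: L01 => ? ?; apply/andP; split; lra.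
apply: (relint_near r0 Fopen) => //.
have : L <= N (y - u) / 2 / g by rewrite ler_pdivlMr.
have : N (y - u) / g < r / 8.
  by rewrite ltr_pdivrMr // (_ : r / 8 * g = r * g / 8) //; ring.
have : N (y - u) < r / 8 by have := ler_wpM2l (ltW r0) (le_trans g12 (_ : 1 / 2 <= 1)); lra.
case/andP: L01 => L0 _; have := norm_ge0 (a - u); nra.
Qed.


Section SupportFunctional.
Variable rho : R.
Hypotheses (rho0 : 0 < rho) (rho1 : rho <= 1).
Hypothesis Flocal : forall y, N y = 1 -> N (y - u) < rho -> F y.

(* The cone over the part of the sphere within [rho] of [u]; it lies over [F], so [N] is
   additive on it. *)
Definition near_cone (x : V) := 0 < N x /\ N ((N x)^-1 *: x - u) < rho.

Lemma near_cone_facet x : near_cone x -> F ((N x)^-1 *: x).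
Proof.
by move=> [x0 xu]; apply: Flocal => //; rewrite normZ_ge0 ?mulVf ?gt_eqF // invr_ge0 ltW.
Qed.

Lemma near_coneD x x' : near_cone x -> near_cone x' ->
  near_cone (x + x') /\ N (x + x') = N x + N x'.
Proof.
move=> [x0 xu] [x'0 x'u]; pose S := N x + N x'.
have S0 : 0 < S by rewrite addr_gt0.
pose l := N x' / S.
have l01 : 0 <= l <= 1.
  by apply/andP; split; [rewrite divr_ge0 // ltW | rewrite ler_pdivrMr // mul1r lerDr ltW].
pose z := (1 - l) *: ((N x)^-1 *: x) + l *: ((N x')^-1 *: x').
have z1 : N z = 1 by apply/facet_norm1/facet_convex => //; apply: near_cone_facet.
have xz : x + x' = S *: z.
  by apply/rowP => j; rewrite /z /l /S !mxE; field; rewrite !gt_eqF.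
have NS : N (x + x') = S by rewrite xz normZ_ge0 ?z1 ?mulr1 // ltW.
split => //; split; first by rewrite NS.
rewrite NS xz scalerA mulVf ?gt_eqF // scale1r.
have -> : z - u = (1 - l) *: ((N x)^-1 *: x - u) + l *: ((N x')^-1 *: x' - u).
  by apply/rowP => j; rewrite /z !mxE; ring.
apply: le_lt_trans (norm_conv _ _ l01) _; case/andP: l01 => l0 l1.
have [->|l0'] := eqVneq l 0; first by rewrite subr0 mul1r mul0r addr0.
have : (1 - l) * N ((N x)^-1 *: x - u) <= (1 - l) * rho by rewrite ler_wpM2l ?subr_ge0 // ltW.
have : l * N ((N x')^-1 *: x' - u) < l * rho by rewrite ltr_pM2l // lt_neqAle eq_sym l0'.
lra.
Qed.

Lemma near_coneZ k x : 0 < k -> near_cone x -> near_cone (k *: x).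
Proof.
move=> k0 [x0 xu]; rewrite /near_cone normZ_ge0 ?ltW // mulr_gt0 //; split => //.
by rewrite scalerA invfM mulrAC mulVf ?gt_eqF // mul1r.
Qed.

Lemma near_cone_u : near_cone u.
Proof. by rewrite /near_cone facet_norm_u invr1 scale1r subrr norm0. Qed.

Lemma normZ_u k : 0 <= k -> N (k *: u) = k.
Proof. by move=> k0; rewrite normZ_ge0 // facet_norm_u mulr1. Qed.

Lemma near_cone_perturb M v : 0 < M -> N v <= M * (rho / 4) -> near_cone (M *: u + v).
Proof.
move=> M0 vM; have v0 := norm_ge0 v; pose W := N (M *: u + v).
have W_le : W <= M + N v by rewrite -{1}(normZ_u (ltW M0)); apply: normD.
have W_ge : M - N v <= W.
  have := norm_le_dist (M *: u) (M *: u + v).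
  have -> : M *: u - (M *: u + v) = - v by apply/rowP => j; rewrite !mxE; ring.
  by rewrite normNv (normZ_u (ltW M0)) -/W; lra.
have vM4 : N v <= M / 4.
  have : M * (rho / 4) <= M * (1 / 4) by rewrite ler_pM2l // ler_pM2r ?invr_gt0.
  lra.
have W0 : 0 < W by lra.
split => //.
have -> : W^-1 *: (M *: u + v) - u = W^-1 *: ((M - W) *: u + v).
  by apply/rowP => j; rewrite !mxE; field; rewrite gt_eqF.
rewrite normZ_ge0 ?invr_ge0 ?ltW // ltr_pdivrMl //.
have : N ((M - W) *: u + v) <= 2 * N v.
  apply: le_trans (normD _ _) _; rewrite normZ facet_norm_u mulr1.
  have : `|M - W| <= N v by rewrite ler_norml; apply/andP; split; lra.
  lra.
have : rho * (M * (3 / 4)) <= rho * W by rewrite ler_pM2l //; lra.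
have : 2 * N v <= 2 * (M * (rho / 4)) by rewrite ler_pM2l.
have : 0 < M * rho by rewrite mulr_gt0.
rewrite [W * rho]mulrC; lra.
Qed.

Definition cone_shift (v : V) := (N v + 1) * 4 / rho.

Lemma cone_shift_gt0 v : 0 < cone_shift v.
Proof. by rewrite /cone_shift divr_gt0 // mulr_gt0 // ltr_wpDl // norm_ge0. Qed.

Lemma near_cone_shift v : near_cone (cone_shift v *: u + v).
Proof.
apply: near_cone_perturb; first exact: cone_shift_gt0.
by rewrite /cone_shift (_ : _ * (rho / 4) = N v + 1); [lra | field; rewrite gt_eqF].
Qed.

(* The additive extension of [N] from the cone: [cone_shift v *: u + v] lies in the cone,
   and by [support_fun_eq] any other such shift gives the same value. *)
Definition support_fun (v : V) := N (cone_shift v *: u + v) - cone_shift v.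

Lemma support_fun_eq v M : 0 < M -> near_cone (M *: u + v) ->
  support_fun v = N (M *: u + v) - M.
Proof.
move=> M0 Mv; have Mu : near_cone (M *: u) by apply: near_coneZ near_cone_u.
have [_ e1] := near_coneD Mv (near_coneZ (cone_shift_gt0 v) near_cone_u).
have [_ e2] := near_coneD (near_cone_shift v) Mu.
have e3 : M *: u + v + cone_shift v *: u = cone_shift v *: u + v + M *: u.
  by apply/rowP => j; rewrite !mxE; ring.
move: e1 e2; rewrite e3; rewrite /support_fun !normZ_u ?ltW ?cone_shift_gt0 // => ->; lra.
Qed.

Lemma support_funD v w : support_fun (v + w) = support_fun v + support_fun w.
Proof.
have [Kvw Nvw] := near_coneD (near_cone_shift v) (near_cone_shift w).
have e : cone_shift v *: u + v + (cone_shift w *: u + w) =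
    (cone_shift v + cone_shift w) *: u + (v + w).
  by apply/rowP => j; rewrite !mxE; ring.
rewrite e in Kvw Nvw.
rewrite (support_fun_eq (addr_gt0 (cone_shift_gt0 v) (cone_shift_gt0 w)) Kvw) Nvw.
by rewrite /support_fun; ring.
Qed.

Lemma support_fun0 : support_fun 0 = 0.
Proof.
have u0 : near_cone (1 *: u + 0) by rewrite scale1r addr0; exact: near_cone_u.
by rewrite (support_fun_eq ltr01 u0) scale1r addr0 facet_norm_u subrr.
Qed.

Lemma support_fun_pZ k v : 0 < k -> support_fun (k *: v) = k * support_fun v.
Proof.
move=> k0; have := near_coneZ k0 (near_cone_shift v).
rewrite scalerDr scalerA => Kkv.
rewrite (support_fun_eq (mulr_gt0 k0 (cone_shift_gt0 v)) Kkv) -scalerA -scalerDr.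
by rewrite normZ_ge0 ?ltW // /support_fun mulrBr.
Qed.

Lemma support_fun_linear : linear_for *%R support_fun.
Proof.
move=> k v w; rewrite support_funD; congr (_ + _).
have [k0|k0|->] := ltgtP k 0; last by rewrite scale0r support_fun0 mul0r.
- have support_funN x : support_fun (- x) = - support_fun x.
    by apply/eqP; rewrite -addr_eq0 -support_funD addNr support_fun0.
  by rewrite -[k]opprK scaleNr support_funN support_fun_pZ ?oppr_gt0 //; ring.
- exact: support_fun_pZ.
Qed.

Lemma support_fun_le v : support_fun v <= N v.
Proof.
rewrite /support_fun; have := normD (cone_shift v *: u) v.
by rewrite (normZ_u (ltW (cone_shift_gt0 v))); lra.
Qed.

Lemma support_fun_facet f : F f -> support_fun f = 1.
Proof.
move=> Ff; rewrite /support_fun; set M := cone_shift f.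
have M0 : 0 < M := cone_shift_gt0 f.
pose z := (1 - (M + 1)^-1) *: u + (M + 1)^-1 *: f.
have Fz : F z.
  apply: facet_convex facet_u Ff _.
  by rewrite invr_ge0 ltW ?addr_gt0 //= invf_le1 ?addr_gt0 // lerDr ltW.
have -> : M *: u + f = (M + 1) *: z.
  by apply/rowP => j; rewrite /z !mxE; field; rewrite gt_eqF ?addr_gt0.
by rewrite normZ_ge0 ?ltW ?addr_gt0 // facet_norm1 //; ring.
Qed.

Lemma support_fun_local x : support_fun x = 1 -> N (x - u) < rho / 4 -> F x.
Proof.
move=> x1 xu.
have Kx : near_cone x.
  have := @near_cone_perturb 1 (x - u) ltr01.
  by rewrite scale1r [u + _]addrC subrK mul1r; apply; exact: ltW.
have K3x : near_cone (3 *: u + x).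
  have := @near_cone_perturb 4 (x - u) (ltr0Sn _ 3).
  have -> : 4 *: u + (x - u) = 3 *: u + x by apply/rowP => j; rewrite !mxE; ring.
  by apply; have := rho0; lra.
have [_ e] := near_coneD (near_coneZ (ltr0Sn _ 2) near_cone_u) Kx.
have Nx : N x = 1.
  by move: x1; rewrite (support_fun_eq (ltr0Sn _ 2) K3x) e normZ_u //; lra.
by have := near_cone_facet Kx; rewrite Nx invr1 scale1r.
Qed.

End SupportFunctional.

Lemma facet_support (pN : polyhedral N) : exists phi : {scalar V},
  [/\ forall v, phi v <= N v, forall f, F f -> phi f = 1 & forall y, phi y = 1 -> aff F y].
Proof.
have [rho0 rho00 Flocal0] := facet_sphere_local pN.
pose rho := Num.min rho0 1.
have rho_gt0 : 0 < rho by rewrite lt_min rho00 ltr01.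
have rho1 : rho <= 1 by rewrite ge_min lexx orbT.
have Flocal y : N y = 1 -> N (y - u) < rho -> F y.
  by move=> y1 yu; apply: Flocal0 => //; apply: lt_le_trans yu _; rewrite ge_min lexx.
exists (scalar_of (support_fun_linear rho_gt0 rho1 Flocal)); split.
- exact: support_fun_le.
- exact: support_fun_facet.
- move=> y; apply: (hyperplane_sub_aff (a := u) (divr_gt0 rho_gt0 (ltr0Sn _ 3))).
  + exact: support_fun_facet facet_u.
  + exact: support_fun_local.
Qed.

End Facet.

Section ExposedFace.
Variable g : {scalar V}.
Hypothesis g_le : forall v, g v <= N v.

Definition exposed : set V := [set z | N z <= 1 /\ g z = 1].

Lemma exposed_face : is_face B exposed.
Proof.
split; first by move=> z [].
- move=> a b t [a1 ga] [b1 gb] t01; split; first exact: ball_conv.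
  by rewrite linearP linearZ /= ga gb; ring.
- move=> a b t a1 b1 /andP[t0 t1] [_]; rewrite linearP linearZ /= => gab.
  have := le_trans (g_le a) a1; have := le_trans (g_le b) b1 => gb ga.
  have [ga1 gb1] : g a = 1 /\ g b = 1 by split; nra.
  by split; split.
Qed.

Lemma aff_exposed z : aff exposed z -> g z = 1.
Proof.
move=> [m [c [p [pE c1 ->]]]]; rewrite linear_sum -c1.
by apply: eq_bigr => i _; rewrite linearZ /=; case: (pE i) => _ ->; rewrite mulr1.
Qed.

Section OpenInHyperplane.
Variables (y : V) (e : R).
Hypotheses (Ey : exposed y) (e0 : 0 < e).
Hypothesis Eopen : forall z, g z = 1 -> N (z - y) < e -> exposed z.

Lemma exposed_relint : relint N exposed y.
Proof. by split => //; exists e => // z zy /aff_exposed gz; apply: Eopen. Qed.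

Lemma exposed_norm1 : N y = 1.
Proof. by have [y1 gy] := Ey; apply: le_anti; rewrite y1 -{1}gy g_le. Qed.

(* The point [y + k (g z *: y - z)] moves from [y] away from [z] inside [g = 1]. *)
Lemma exposed_push z : exists2 k, 0 < k <= 1 & exposed ((1 + k * g z) *: y - k *: z).
Proof.
pose D := N (z - g z *: y).
have D1 : 0 < D + 1 by rewrite ltr_wpDl ?norm_ge0.
pose k := Num.min 1 (e / (2 * (D + 1))).
have k0 : 0 < k by rewrite lt_min ltr01 divr_gt0 // mulr_gt0.
exists k; first by rewrite k0 ge_min lexx.
apply: Eopen; first by rewrite linearB !linearZ /=; case: Ey => _ ->; ring.
have -> : (1 + k * g z) *: y - k *: z - y = (- k) *: (z - g z *: y).
  by apply/rowP => j; rewrite !mxE; ring.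
rewrite normZ normrN gtr0_norm // -/D.
have kDe : k <= e / (2 * (D + 1)) by rewrite ge_min lexx orbT.
have : k * D <= e / (2 * (D + 1)) * D by rewrite ler_wpM2r ?norm_ge0.
have -> : e / (2 * (D + 1)) * D = e / 2 * (D / (D + 1)) by field; rewrite gt_eqF.
have : D / (D + 1) < 1 by rewrite ltr_pdivrMr // mul1r ltrDl.
have : 0 <= D / (D + 1) by rewrite divr_ge0 ?norm_ge0 // ltW.
have := e0; nra.
Qed.

(* A face [G] strictly containing [exposed] contains some [z] with [g z < 1]; a point of
   the segment from [z] to the pushed point of [exposed_push] is a multiple of [y] of norm
   [< 1], so [G] is the whole ball. *)
Lemma exposed_facet : is_facet B exposed.
Proof.
split; first exact: exposed_face.
  move=> EB; have : exposed 0 by rewrite EB /unit_ball /= norm0.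
  by case=> _; rewrite linear0 => /eqP; rewrite eq_sym oner_eq0.
move=> G Gface GB EG; apply/seteqP; split => // z Gz.
have z1 : N z <= 1 by case: Gface => + _ _; apply.
apply/not_notP => Ez; pose s := g z.
have s1 : s < 1.
  rewrite lt_neqAle (le_trans (g_le z) z1) andbT; apply/eqP => gz; exact: Ez.
have sN1 : -1 <= s by have := g_le (- z); rewrite linearN normNv /= -/s; lra.
have [k /andP[k0 k1'] /EG Gq] := exposed_push z; rewrite -/s in Gq.
have k1 : 0 < 1 + k by rewrite addr_gt0.
have [_ Gconv _] := Gface.
have b01 : 0 <= k / (1 + k) <= 1.
  by apply/andP; split; [rewrite divr_ge0 // ltW | rewrite ler_pdivrMr // mul1r lerDr ltW].
have := Gconv _ _ _ Gq Gz b01.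
have -> : (1 - k / (1 + k)) *: ((1 + k * s) *: y - k *: z) + k / (1 + k) *: z =
    ((1 + k * s) / (1 + k)) *: y.
  by apply/rowP => j; rewrite !mxE; field; rewrite gt_eqF.
move=> Gp; apply: GB; apply: face_ball_interior Gface Gp _.
have ks : 0 <= 1 + k * s by nra.
have c0 : 0 <= (1 + k * s) / (1 + k) by rewrite divr_ge0 // ltW.
by rewrite normZ_ge0 // exposed_norm1 mulr1 ltr_pdivrMr // mul1r; nra.
Qed.

End OpenInHyperplane.

End ExposedFace.

End NormedSpace.

Lemma polyhedral_linear_bounded (R : realType) (n : nat) (N1 N2 : 'rV[R]_n -> R)
    (f : {linear 'rV[R]_n -> 'rV[R]_n}) : is_norm N1 -> is_norm N2 -> polyhedral N1 ->
  exists2 C : R, 0 < C & forall v, N2 (f v) <= C * N1 v.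
Proof.
move=> hN1 hN2 pN1; have [C0 fC0] := finite_ub (fun e => N2 (f e)) pN1.
pose C := Num.max C0 1; exists C; first by rewrite lt_max ltr01 orbT.
have ballC : unit_ball N1 `<=` [set w | N2 (f w) <= C].
  apply: subset_trans (ball_hull_extreme hN1) _ => w; apply.
    move=> a b t fa fb t01; rewrite /= linearP linearZ /=.
    apply: le_trans (norm_conv hN2 _ _ t01) _; case/andP: t01 => t0 t1.
    have t'0 : 0 <= 1 - t by rewrite subr_ge0.
    by have := ler_wpM2l t'0 fa; have := ler_wpM2l t0 fb; lra.
  by move=> e /fC0 eC; apply: le_trans eC _; rewrite le_max lexx.
move=> v; have [->|v0] := eqVneq v 0; first by rewrite linear0 !norm0 ?mulr0.
have v_gt0 := norm_gt0 hN1 v0; pose w := (N1 v)^-1 *: v.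
have w1 : N1 w = 1 by rewrite normZ_ge0 ?invr_ge0 ?(ltW v_gt0) // mulVf ?gt_eqF.
have vw : v = N1 v *: w by rewrite /w scalerA mulfV ?gt_eqF // scale1r.
have fw : N2 (f w) <= C by apply: ballC; rewrite /unit_ball /= w1.
clearbody w; rewrite vw linearZ /= (normZ_ge0 hN2) ?(ltW v_gt0) //.
by rewrite (normZ_ge0 hN1) ?(ltW v_gt0) // w1 mulr1 mulrC ler_pM2r.
Qed.

Section BJPreserving.
Variables (R : realType) (n : nat).
Notation V := 'rV[R]_n.
Variables (NX NY : V -> R) (F : set V) (u : V) (T Ti : {linear V -> V}) (phi : {scalar V}).
Hypotheses (hNX : is_norm NX) (hNY : is_norm NY) (pY : polyhedral NY).
Hypotheses (hF : is_facet (unit_ball NX) F) (hu : relint NX F u).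
Hypotheses (TK : cancel T Ti) (KT : cancel Ti T).
Hypothesis hpres : forall x, relint NX F x -> preserves_bj_at NX NY T x.
Hypotheses (phi_le : forall v, phi v <= NX v) (phiF : forall f, F f -> phi f = 1).
Hypothesis phi_aff : forall y, phi y = 1 -> aff F y.

Notation c := (NY (T u)).

Lemma bj_orth_facet x d : F x -> phi d = 0 -> bj_orth NX x d.
Proof.
move=> Fx d0 l; rewrite (facet_norm1 hNX hF Fx).
by apply: le_trans (phi_le _); rewrite linearD linearZ /= d0 mulr0 addr0 phiF.
Qed.

Lemma norm_T_relint x : relint NX F x -> NY (T x) = c.
Proof.
move=> hx; have Fx : F x by case: hx.
have Fu : F u by case: hu.
have ker a b : F a -> F b -> phi (a - b) = 0 by move=> Fa Fb; rewrite linearB /= !phiF ?subrr.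
have := hpres hx (bj_orth_facet Fx (ker _ _ Fu Fx)) 1.
have := hpres hu (bj_orth_facet Fu (ker _ _ Fx Fu)) 1.
rewrite !scale1r !linearB /= !subrKC => xu ux.
by apply: le_anti; rewrite ux xu.
Qed.

Lemma norm_Tu_gt0 : 0 < c.
Proof.
apply: (norm_gt0 hNY); apply/eqP => Tu0; have Fu : F u by case: hu.
have := facet_norm1 hNX hF Fu; rewrite -[u]TK Tu0 linear0 (norm0 hNX).
by move=> /eqP; rewrite eq_sym oner_eq0.
Qed.

Lemma exposing_fun_linear : linear_for *%R (fun v => c * phi (Ti v)).
Proof. by move=> a v w; rewrite !linearP /=; ring. Qed.

Definition exposing_fun : {scalar V} := scalar_of exposing_fun_linear.
Local Notation g := exposing_fun.

(* On the hyperplane [phi = 1], [x - u] lies in [ker phi]; so [u] is orthogonal to it,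
   and preservation at [u] gives [c <= NY (T x)]. *)
Lemma exposing_fun_le v : g v <= NY v.
Proof.
rewrite /exposing_fun /=; set s := phi (Ti v); have c0 := norm_Tu_gt0.
have [s0|s_gt0] := lerP s 0; first by apply: le_trans (norm_ge0 hNY v); nra.
have Fu : F u by case: hu.
have ker : phi (s^-1 *: Ti v - u) = 0.
  by rewrite linearB linearZ /= -/s mulVf ?gt_eqF // phiF ?subrr.
have := hpres hu (bj_orth_facet Fu ker) 1.
rewrite scale1r linearB /= subrKC linearZ /= KT (normZ_ge0 hNY); last by rewrite invr_ge0 ltW.
by rewrite ler_pdivlMl // mulrC.
Qed.

Lemma T_relint_exposed x : relint NX F x -> exposed NY g (c^-1 *: T x).
Proof.
move=> hx; have Fx : F x by case: hx.
have c0 := norm_Tu_gt0; split.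
  by rewrite (normZ_ge0 hNY) ?invr_ge0 ?(ltW c0) // norm_T_relint // mulVf ?gt_eqF.
by rewrite linearZ /= TK phiF // mulr1 mulVf ?gt_eqF.
Qed.

Lemma T_relint_open x : relint NX F x -> exists2 e, 0 < e &
  forall z, g z = 1 -> NY (z - c^-1 *: T x) < e -> exposed NY g z.
Proof.
move=> hx; have [Fx [ex ex0 Fopen]] := hx.
have [C C0 TiC] := polyhedral_linear_bounded Ti hNY hNX pY.
have c0 := norm_Tu_gt0.
exists (ex / (2 * (C * c))); first by rewrite divr_gt0 // !mulr_gt0.
move=> z gz zx; pose x' := Ti (c *: z).
have px' : phi x' = 1 by rewrite /x' linearZ /= linearZ.
have x'x : NX (x' - x) < ex / 2.
  have -> : x' - x = Ti (c *: (z - c^-1 *: T x)).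
    by rewrite scalerBr scalerA mulfV ?gt_eqF // scale1r linearB /= TK.
  apply: le_lt_trans (TiC _) _; rewrite normZ_ge0 ?ltW // mulrA.
  have -> : ex / 2 = C * c * (ex / (2 * (C * c))) by field; rewrite !gt_eqF.
  by rewrite ltr_pM2l ?mulr_gt0.
have hx' : relint NX F x'.
  by apply: (relint_near hNX ex0 Fopen) => //; apply: Fopen (phi_aff px'); lra.
have := norm_T_relint hx'; rewrite /x' KT normZ_ge0 ?ltW // => cz.
have z1 : NY z = 1 by apply: (mulfI (lt0r_neq0 c0)); rewrite cz mulr1.
by split; rewrite ?z1.
Qed.

Lemma bj_preserving_exposed_facet : exists G, is_facet (unit_ball NY) G /\
  forall x, relint NX F x -> relint NY G (c^-1 *: T x).
Proof.
exists (exposed NY g); split.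
  have [e e0 Eopen] := T_relint_open hu.
  exact: (exposed_facet hNY exposing_fun_le (T_relint_exposed hu) e0 Eopen).
move=> x hx; have [e e0 Eopen] := T_relint_open hx.
exact: exposed_relint (T_relint_exposed hx) e0 Eopen.
Qed.

End BJPreserving.

Theorem mainTheorem16 (R : realType) (n : nat) (NX NY : 'rV[R]_n -> R)
  (hNX : is_norm NX) (hNY : is_norm NY)
  (pX : polyhedral NX) (pY : polyhedral NY)
  (F : set 'rV[R]_n) (hF : is_facet (unit_ball NX) F)
  (T : {linear 'rV[R]_n -> 'rV[R]_n}) (hT : bijective T)
  (hpres : forall x, relint NX F x -> preserves_bj_at NX NY T x)
  (u : 'rV[R]_n) (hu : relint NX F u) :
  exists G : set 'rV[R]_n, is_facet (unit_ball NY) G /\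
    (forall x, relint NX F x -> relint NY G ((NY (T u))^-1 *: T x)).
Proof.
have [Tinv TK KT] := hT.
pose Ti : {linear 'rV[R]_n -> 'rV[R]_n} :=
  HB.pack Tinv (GRing.isLinear.Build _ _ _ _ Tinv (can2_linear TK KT)).
have [phi [phi_le phiF phi_aff]] := facet_support hNX hF hu pX.
exact: (bj_preserving_exposed_facet (Ti := Ti) hNX hNY pY hF hu TK KT hpres phi_le phiF phi_aff).
Qed.
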